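(* Let $P,X,Y\in\Sigma^*$ and $A=PX$, $B=PY$. Then $\mathrm{MCS}(A,B)=\{PZ : Z\in\mathrm{MCS}(X,Y)\}$.
   Context: $\mathrm{MCS}(A,B)$ denotes the set of minimal common supersequences of $A$ and $B$: strings $C$ with $A$ and $B$ both (not necessarily contiguous) subsequences of $C$, such that no proper subsequence of $C$ has this property. $PX$ denotes concatenation. *)

From mathcomp Require Import all_boot.
Set Implicit Arguments. Unset Strict Implicit. Unset Printing Implicit Defensive.

(* Strings over an alphabet Sigma are sequences [seq Sigma] over an eqType;
   "not necessarily contiguous subsequence" is MathComp's [subseq]. *)

Definition common_superseq (Sigma : eqType) (A B C : seq Sigma) : bool :=
  subseq A C && subseq B C.

Definition is_MCS (Sigma : eqType) (A B C : seq Sigma) : Prop :=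
  common_superseq A B C /\
  forall D : seq Sigma, subseq D C -> D != C -> ~~ common_superseq A B D.

From mathcomp Require Import all_boot.

(* By induction on P it suffices to treat a common first letter a.  A minimal
   common supersequence C of a :: X and a :: Y must begin with a: otherwise
   dropping its first letter leaves a shorter common supersequence.  Writing
   C = a :: Z, the proper subsequences of a :: Z that are common supersequences
   of a :: X and a :: Y correspond to those of Z for X and Y. *)

Section ConsMCS.

Variables (T : eqType) (a : T) (X Y : seq T).

Lemma common_superseq_cons2 Z :
  common_superseq (a :: X) (a :: Y) (a :: Z) = common_superseq X Y Z.
Proof. by rewrite /common_superseq /= eqxx. Qed.

Lemma common_superseq_cons_neq {c : T} {C : seq T} : c != a ->
  common_superseq (a :: X) (a :: Y) (c :: C) = common_superseq (a :: X) (a :: Y) C.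
Proof. by move=> /negbTE nca; rewrite /common_superseq /= eq_sym nca. Qed.

Lemma common_superseq_behead {C : seq T} :
  common_superseq (a :: X) (a :: Y) C -> common_superseq X Y C.
Proof. by case/andP=> /cons_subseq supX /cons_subseq supY; apply/andP. Qed.

Lemma neq_cons_subseq {x : T} {s t : seq T} : subseq (x :: s) t -> s != t.
Proof. by move=> /size_subseq; apply: contraTneq => ->; rewrite ltnn. Qed.

Lemma is_MCS_cons_head {C : seq T} :
  is_MCS (a :: X) (a :: Y) C -> exists Z, C = a :: Z.
Proof.
case: C => [|c C] [supC minC]; first by case/andP: supC.
have [-> | nca] := eqVneq c a; first by exists C.
have := minC C (subseq_cons C c) (neq_cons_subseq (subseq_refl _)).
by rewrite -(common_superseq_cons_neq nca) supC.
Qed.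

Lemma is_MCS_cons2 Z : is_MCS (a :: X) (a :: Y) (a :: Z) <-> is_MCS X Y Z.
Proof.
rewrite /is_MCS common_superseq_cons2; split=> -[supZ minZ]; split=> // D subD neqD.
  by have := minZ (a :: D); rewrite /= eqxx eqseq_cons eqxx common_superseq_cons2; apply.
apply/negP; case: D subD neqD => [|d D] subD neqD supD; first by case/andP: supD.
have [eda | nda] := eqVneq d a.
  move: subD neqD supD; rewrite eda /= eqxx eqseq_cons eqxx common_superseq_cons2.
  by move=> subD neqD; apply/negP; apply: minZ.
rewrite /= (negbTE nda) in subD.
rewrite common_superseq_cons_neq // in supD.
have := minZ D (subseq_trans (subseq_cons D d) subD) (neq_cons_subseq subD).
by rewrite (common_superseq_behead supD).
Qed.

Lemma is_MCS_consE C :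
  is_MCS (a :: X) (a :: Y) C <-> exists2 Z, is_MCS X Y Z & C = a :: Z.
Proof.
split=> [mcsC | [Z mcsZ ->]]; last exact/is_MCS_cons2.
have [Z defC] := is_MCS_cons_head mcsC.
by exists Z => //; apply/is_MCS_cons2; rewrite -defC.
Qed.

End ConsMCS.

Theorem mainTheorem7 (Sigma : eqType) (P X Y : seq Sigma) :
  forall C : seq Sigma,
    is_MCS (P ++ X) (P ++ Y) C <-> exists2 Z : seq Sigma, is_MCS X Y Z & C = P ++ Z.
Proof.
elim: P => [|a P IH] C /=.
  by split=> [mcsC | [Z mcsZ ->]]; first exists C.
split=> [/is_MCS_consE [W /IH [Z mcsZ ->] ->] | [Z mcsZ ->]].
  by exists Z.
by apply/is_MCS_consE; exists (P ++ Z) => //; apply/IH; exists Z.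
Qed.
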